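(* Let $K$ be a finite field of odd characteristic and $d:V\times V\to K$ a non-degenerate symmetric bilinear form with $n=\dim V$. Let $\mathcal{X},\mathcal{Y}$ be orthogonal bases of $d$ (viewed as sets of $1$-dimensional subspaces) with addresses $(n-s:s)$ and $(n-r:r)$ respectively. (i) If $n$ is odd, then $\mathcal{X}\varphi=\mathcal{Y}$ for some $(\varphi,\hat\varphi)\in\operatorname{Isom}^*(d)$ if and only if $s=r$. (ii) If $n$ is even, then $\mathcal{X}\varphi=\mathcal{Y}$ for some $(\varphi,\hat\varphi)\in\operatorname{Isom}^*(d)$ if and only if $s=r$ or $s=n-r$.
   Context: An orthogonal basis of $d$ is a basis $\{x_1,\dots,x_n\}$ of $V$ with $d(x_i,x_j)=0$ for $i\ne j$; it is identified with the set $\{\langle x_i\rangle\}$ of lines, and $\mathcal{X}\varphi=\{X\varphi:X\in\mathcal{X}\}$. Its address is $(n-s:s)$ where $s$ is the number of $i$ for which $d(x_i,x_i)$ is a non-square in $K$. $\operatorname{Isom}^*(d)=\{(\varphi,\hat\varphi)\in\mathrm{GL}(V)\times K^\times: d(u\varphi,v\varphi)=\hat\varphi\, d(u,v)\ \forall u,v\}$. *)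

From HB Require Import structures.
From mathcomp Require Import all_boot all_order all_algebra.
Set Implicit Arguments. Unset Strict Implicit. Unset Printing Implicit Defensive.
Import Order.TTheory GRing.Theory Num.Theory.
Local Open Scope ring_scope.

Definition is_bilinear_form (K : fieldType) (n : nat) (d : 'rV[K]_n -> 'rV[K]_n -> K) :=
  (forall (a : K) u v w, d (a *: u + v) w = a * d u w + d v w) /\
  (forall (a : K) u v w, d u (a *: v + w) = a * d u v + d u w).

Definition my_symmetric_form (K : fieldType) (n : nat) (d : 'rV[K]_n -> 'rV[K]_n -> K) :=
  forall u v, d u v = d v u.

Definition my_nondegenerate_form (K : fieldType) (n : nat) (d : 'rV[K]_n -> 'rV[K]_n -> K) :=
  forall u, (forall v, d u v = 0) -> u = 0.

Definition my_orthogonal_basis (K : fieldType) (n : nat) (d : 'rV[K]_n -> 'rV[K]_n -> K)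
  (x : 'I_n -> 'rV[K]_n) :=
  row_free (\matrix_i x i) /\ (forall i j, i != j -> d (x i) (x j) = 0).

Definition is_square (K : finFieldType) (a : K) : bool := [exists k : K, k ^+ 2 == a].

(* the s in the address (n-s:s): number of i with d(x_i,x_i) a non-square *)
Definition address_s (K : finFieldType) (n : nat) (d : 'rV[K]_n -> 'rV[K]_n -> K)
  (x : 'I_n -> 'rV[K]_n) : nat :=
  #|[set i : 'I_n | ~~ is_square (d (x i) (x i))]|.

(* (phi, phihat) in Isom*(d): phi in GL(V) (u |-> u *m A, A invertible),
   phihat in K^x, d(u phi, v phi) = phihat d(u,v). *)
Definition in_Isom_star (K : fieldType) (n : nat) (d : 'rV[K]_n -> 'rV[K]_n -> K)
  (A : 'M[K]_n) (c : K) :=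
  A \in unitmx /\ c != 0 /\ (forall u v, d (u *m A) (v *m A) = c * d u v).

(* X phi = Y as sets of lines {<x_i>}: every line <x_i phi> is some <y_j>
   and every <y_j> is some <x_i phi>. *)
Definition maps_lines_onto (K : fieldType) (n : nat) (x y : 'I_n -> 'rV[K]_n)
  (A : 'M[K]_n) :=
  (forall i, exists j, (x i *m A == y j)%MS) /\
  (forall j, exists i, (x i *m A == y j)%MS).

From HB Require Import structures.
From mathcomp Require Import all_boot all_order all_algebra.
From mathcomp Require Import fingroup perm cyclic finfield.
Set Implicit Arguments. Unset Strict Implicit. Unset Printing Implicit Defensive.
Import Order.TTheory GRing.Theory Num.Theory.
Local Open Scope ring_scope.

(** Over a finite field of odd characteristic the non-zero squares have index 2 in
    the unit group, so squareness is a multiplicative Z/2-valued class.  A map in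
    Isom*(d) with multiplier c sends each line <x_i> to some <y_j> and
    c d(x_i,x_i) to d(y_j,y_j) up to a non-zero square; hence s = r when c is a
    square and s = n - r otherwise.  Conversely, matching the classes of
    c d(x_i,x_i) and d(y_j,y_j) by a permutation and rescaling the y_j gives such a
    map, with c = 1 or c a non-square.  Finally the discriminant, the product of the
    d(x_i,x_i), only changes by a square under a change of orthogonal basis, so s
    and r have the same parity, which rules out s = n - r when n is odd. *)

Section FiniteFieldSquares.
Variable K : finFieldType.

Lemma expf_card_pred (a : K) : a != 0 -> a ^+ #|K|.-1 = 1.
Proof.
move=> a_neq0; apply: (mulIf a_neq0); rewrite mul1r -exprSr prednK ?expf_card //.
by apply/card_gt0P; exists 0.
Qed.

Lemma exists_prim_root_card : exists z : K, #|K|.-1.-primitive_root z.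
Proof.
have K1_gt0 : (0 < #|K|.-1)%N.
  by rewrite -(cardC1 (0 : K)); apply/card_gt0P; exists 1; rewrite !inE oner_eq0.
have [||| z _ z_prim] := hasP (@has_prim_root K _ (enum (predC1 (0 : K))) K1_gt0 _ _ _).
- by apply/allP => a; rewrite mem_enum !inE unity_rootE => /expf_card_pred ->.
- exact: enum_uniq.
- by rewrite -cardE cardC1.
by exists z.
Qed.

Hypothesis two_neq0 : (2%:R : K) != 0.

Section PrimitiveRoot.
Variable z : K.
Hypothesis z_prim : #|K|.-1.-primitive_root z.

Lemma card_unit_even : ~~ odd #|K|.-1.
Proof.
apply/negP => odd_K1.
have m1_neq0 : -1 != 0 :> K by rewrite oppr_eq0 oner_eq0.
have [i z_i] := prim_rootP z_prim (expf_card_pred m1_neq0).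
have : (#|K|.-1 %| i * 2)%N.
  by rewrite (prim_order_dvd z_prim) exprM -z_i sqrrN expr1n.
rewrite Gauss_dvdl ?coprimen2 // (prim_order_dvd z_prim) -z_i => /eqP m1_eq1.
by move: two_neq0; rewrite mulr2n -{2}m1_eq1 subrr eqxx.
Qed.

Lemma is_square_prim_expr i : is_square (z ^+ i) = ~~ odd i.
Proof.
have z_neq0 : z != 0.
  apply/eqP => z_eq0; have := prim_expr_order z_prim.
  by rewrite z_eq0 expr0n gtn_eqF ?(prim_order_gt0 z_prim) // => /eqP; rewrite eq_sym oner_eq0.
apply/existsP/idP => [[k /eqP k2_zi] | even_i]; last first.
  by exists (z ^+ i./2); rewrite -exprM -{2}(odd_double_half i) (negbTE even_i) muln2.
have k_neq0 : k != 0 by move: (expf_neq0 i z_neq0); rewrite -k2_zi expf_eq0.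
have [j k_zj] := prim_rootP z_prim (expf_card_pred k_neq0).
move/eqP: k2_zi; rewrite k_zj -exprM (eq_prim_root_expr z_prim) => /eqP j2_i.
have K1_even := negbTE card_unit_even.
by rewrite -(odd_mod i K1_even) -j2_i odd_mod ?oddM ?andbF.
Qed.

End PrimitiveRoot.

Lemma is_squareM (a b : K) : a != 0 -> b != 0 ->
  is_square (a * b) = (is_square a == is_square b).
Proof.
move=> a_neq0 b_neq0; have [z z_prim] := exists_prim_root_card.
have [i ->] := prim_rootP z_prim (expf_card_pred a_neq0).
have [j ->] := prim_rootP z_prim (expf_card_pred b_neq0).
by rewrite -exprD !(is_square_prim_expr z_prim) oddD; case: odd; case: odd.
Qed.

Lemma exists_nonsquare : exists e : K, ~~ is_square e.
Proof.
have [z z_prim] := exists_prim_root_card.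
by exists z; rewrite -(expr1 z) (is_square_prim_expr z_prim).
Qed.

Lemma is_square_sqr (k : K) : is_square (k ^+ 2).
Proof. by apply/existsP; exists k. Qed.

Lemma is_square1 : is_square (1 : K).
Proof. by rewrite -(expr1n _ 2) is_square_sqr. Qed.

Lemma is_square_prod (I : finType) (a : I -> K) : (forall i, a i != 0) ->
  ~~ is_square (\prod_i a i) = odd #|[set i | ~~ is_square (a i)]|.
Proof.
move=> a_neq0.
have [_ ->] : \prod_i a i != 0 /\
    ~~ is_square (\prod_i a i) = odd (\sum_i (~~ is_square (a i) : nat)).
  apply: (big_ind2 (fun (p : K) (k : nat) => p != 0 /\ ~~ is_square p = odd k)).
  - by rewrite oner_neq0 is_square1.
  - move=> p1 k1 p2 k2 [p1_neq0 odd_k1] [p2_neq0 odd_k2]; split; first exact: mulf_neq0.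
    by rewrite is_squareM // oddD -odd_k1 -odd_k2; case: is_square; case: is_square.
  - by move=> i _; split; last by case: is_square.
congr odd; rewrite -sum1_card [RHS]big_mkcond; apply: eq_bigr => i _.
by rewrite inE; case: is_square.
Qed.

Lemma is_square_sqrM (k a : K) : k != 0 -> a != 0 -> is_square (k ^+ 2 * a) = is_square a.
Proof. by move=> k_neq0 a_neq0; rewrite is_squareM ?expf_neq0 // is_square_sqr. Qed.

Lemma exists_sqrM (a b : K) : a != 0 -> b != 0 -> is_square a = is_square b ->
  exists2 k : K, k != 0 & k ^+ 2 * b = a.
Proof.
move=> a_neq0 b_neq0 sq_ab.
have binv_neq0 : b^-1 != 0 by rewrite invr_eq0.
have /existsP[k /eqP k2] : is_square (a / b).
  rewrite is_squareM // sq_ab; apply/eqP.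
  by have := is_squareM b_neq0 binv_neq0; rewrite mulfV // is_square1 => /esym/eqP.
exists k; last by rewrite k2 divfK.
by apply: contra_eq_neq k2 => ->; rewrite expr0n eq_sym mulf_neq0.
Qed.

End FiniteFieldSquares.

Lemma perm_eq_mem_enum (T : finType) (A B : {set T}) : #|A| = #|B| ->
  perm_eq [seq x \in A | x <- enum T] [seq x \in B | x <- enum T].
Proof.
move=> card_AB.
have count_mem_in (C : {set T}) b :
    count_mem b [seq x \in C | x <- enum T] = #|if b then C else ~: C|.
  rewrite count_map enumT cardE /enum_mem size_filter.
  by apply: eq_count => x /=; case: b; rewrite ?inE ?eqb_id ?eqbF_neg.
apply/allP => b _; rewrite /= !count_mem_in.
by case: b => /=; [apply/eqP | rewrite -(eqn_add2l #|A|) cardsC card_AB cardsC].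
Qed.

Lemma perm_of_card_eq n (A B : {set 'I_n}) : #|A| = #|B| ->
  exists s : 'S_n, forall i, (s i \in B) = (i \in A).
Proof.
move/perm_eq_mem_enum; rewrite -[X in perm_eq _ X]/(val [tuple i \in B | i < n]).
case/tuple_permP => s sAB; exists s => i.
have := congr1 (nth false ^~ i) sAB.
by rewrite (nth_map i) ?size_enum_ord // nth_ord_enum -tnth_nth !tnth_mktuple => ->.
Qed.

Lemma row_free_span (K : fieldType) n (x : 'I_n -> 'rV[K]_n) (u : 'rV[K]_n) :
  row_free (\matrix_i x i) -> exists a : 'I_n -> K, u = \sum_i a i *: x i.
Proof.
rewrite row_free_unit => x_unit; exists (fun i => (u *m invmx (\matrix_i x i)) 0 i).
rewrite -{1}[u]mulmx1 -(mulVmx x_unit) mulmxA mulmx_sum_row.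
by apply: eq_bigr => i _; rewrite rowK.
Qed.

Lemma exists_mx_map_rows (K : fieldType) n (x z : 'I_n -> 'rV[K]_n) :
  row_free (\matrix_i x i) -> row_free (\matrix_i z i) ->
  exists2 A : 'M[K]_n, A \in unitmx & forall i, x i *m A = z i.
Proof.
rewrite !row_free_unit => x_unit z_unit.
exists (invmx (\matrix_i x i) *m \matrix_i z i); first by rewrite unitmx_mul unitmx_inv x_unit.
by move=> i; rewrite -(rowK x i) -row_mul mulmxA mulmxV // mul1mx rowK.
Qed.

Section BilinearForm.
Variables (K : fieldType) (n : nat) (d : 'rV[K]_n -> 'rV[K]_n -> K).
Hypothesis d_bilin : is_bilinear_form d.

Lemma formDZl a u v w : d (a *: u + v) w = a * d u w + d v w.
Proof. by case: d_bilin. Qed.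

Lemma formDZr a u v w : d w (a *: u + v) = a * d w u + d w v.
Proof. by case: d_bilin. Qed.

Lemma form0l w : d 0 w = 0.
Proof. by apply/(addrI (d 0 w)); rewrite addr0 -{1}(mul1r (d 0 w)) -formDZl scale1r addr0. Qed.

Lemma form0r w : d w 0 = 0.
Proof. by apply/(addrI (d w 0)); rewrite addr0 -{1}(mul1r (d w 0)) -formDZr scale1r addr0. Qed.

Lemma formZl a u w : d (a *: u) w = a * d u w.
Proof. by rewrite -[a *: u]addr0 formDZl form0l addr0. Qed.

Lemma formZr a u w : d w (a *: u) = a * d w u.
Proof. by rewrite -[a *: u]addr0 formDZr form0r addr0. Qed.

Lemma formDl u v w : d (u + v) w = d u w + d v w.
Proof. by rewrite -{1}[u]scale1r formDZl mul1r. Qed.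

Lemma formDr u v w : d w (u + v) = d w u + d w v.
Proof. by rewrite -{1}[u]scale1r formDZr mul1r. Qed.

Lemma form_suml (a : 'I_n -> K) (z : 'I_n -> 'rV[K]_n) w :
  d (\sum_i a i *: z i) w = \sum_i a i * d (z i) w.
Proof.
elim/big_rec2: _ => [|i u s _ IH]; first exact: form0l.
by rewrite formDl formZl IH.
Qed.

Lemma form_sumr (a : 'I_n -> K) (z : 'I_n -> 'rV[K]_n) w :
  d w (\sum_i a i *: z i) = \sum_i a i * d w (z i).
Proof.
elim/big_rec2: _ => [|i u s _ IH]; first exact: form0r.
by rewrite formDr formZr IH.
Qed.

Lemma form_sum_orthogonal (z : 'I_n -> 'rV[K]_n) (a b : 'I_n -> K) :
  (forall i j, i != j -> d (z i) (z j) = 0) ->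
  d (\sum_i a i *: z i) (\sum_j b j *: z j) = \sum_i a i * b i * d (z i) (z i).
Proof.
move=> z_orth; rewrite form_suml; apply: eq_bigr => i _.
rewrite form_sumr (bigD1 i) //= big1 => [|j ji]; first by rewrite addr0 mulrA.
by rewrite z_orth ?mulr0 // eq_sym.
Qed.

Lemma isometry_of_orthogonal_basis x z (A : 'M[K]_n) c :
  my_orthogonal_basis d x -> (forall i j, i != j -> d (z i) (z j) = 0) ->
  (forall i, x i *m A = z i) -> (forall i, d (z i) (z i) = c * d (x i) (x i)) ->
  forall u v, d (u *m A) (v *m A) = c * d u v.
Proof.
move=> [x_free x_orth] z_orth xA dz u v.
have [a ->] := row_free_span u x_free; have [b ->] := row_free_span v x_free.
rewrite !mulmx_suml; under eq_bigr do rewrite -scalemxAl xA.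
under [in X in d _ X]eq_bigr do rewrite -scalemxAl xA.
rewrite !form_sum_orthogonal // mulr_sumr.
by apply: eq_bigr => i _; rewrite dz mulrCA.
Qed.

Lemma prod_self_change_basis x y :
  my_orthogonal_basis d x -> my_orthogonal_basis d y ->
  exists2 e : K, e != 0 & \prod_i d (x i) (x i) = e ^+ 2 * \prod_i d (y i) (y i).
Proof.
move=> [x_free x_orth] [y_free y_orth].
set X := \matrix_i x i; set Y := \matrix_i y i.
have [X_unit Y_unit] : X \in unitmx /\ Y \in unitmx by rewrite -!row_free_unit.
set M := X *m invmx Y.
have x_M i : x i = \sum_j M i j *: y j.
  rewrite -(rowK x i) -/X -[X](mulmxKV Y_unit) -/M row_mul mulmx_sum_row.
  by apply: eq_bigr => j _; rewrite rowK mxE.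
have gram : diag_mx (\row_i d (x i) (x i)) = M *m diag_mx (\row_j d (y j) (y j)) *m M^T.
  apply/matrixP => i k.
  have -> : diag_mx (\row_i d (x i) (x i)) i k = d (x i) (x k).
    by rewrite !mxE; case: (eqVneq i k) => [->|ik] /=; rewrite ?mulr1n // mulr0n x_orth.
  rewrite (x_M i) (x_M k) form_sum_orthogonal // !mxE; apply: eq_bigr => j _.
  by rewrite mul_mx_diag !mxE mulrAC.
exists (\det M); first by rewrite -unitfE -unitmxE unitmx_mul X_unit unitmx_inv.
have := congr1 determinant gram; rewrite (det_mulmx (M *m _)) (det_mulmx M) det_tr !det_diag.
under eq_bigr do rewrite mxE; under [in RHS]eq_bigr do rewrite mxE.
by move=> ->; rewrite mulrAC -expr2.
Qed.

Hypothesis d_nondeg : my_nondegenerate_form d.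

Lemma orthogonal_basis_self_neq0 x i : my_orthogonal_basis d x -> d (x i) (x i) != 0.
Proof.
move=> [x_free x_orth]; apply/eqP => dxx0.
have x_i0 : x i = 0.
  apply: d_nondeg => v; have [a ->] := row_free_span v x_free.
  rewrite form_sumr big1 // => j _.
  by case: (eqVneq i j) => [<-|ij]; rewrite ?dxx0 ?x_orth ?mulr0.
have := rowE i (\matrix_j x j); rewrite rowK x_i0 -(mul0mx _ (\matrix_j x j)).
move=> /esym/(row_free_inj x_free)/matrixP/(_ 0 i).
by rewrite !mxE !eqxx => /eqP; rewrite oner_eq0.
Qed.
End BilinearForm.

Lemma address_s_le (K : finFieldType) n (d : 'rV[K]_n -> 'rV[K]_n -> K) x :
  (address_s d x <= n)%N.
Proof. by rewrite -{2}(card_ord n) max_card. Qed.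

Section Address.
Variables (K : finFieldType) (n : nat) (d : 'rV[K]_n -> 'rV[K]_n -> K).
Hypotheses (two_neq0 : (2%:R : K) != 0) (d_bilin : is_bilinear_form d)
  (d_nondeg : my_nondegenerate_form d).
Variables x y : 'I_n -> 'rV[K]_n.
Hypotheses (x_basis : my_orthogonal_basis d x) (y_basis : my_orthogonal_basis d y).

Let dxx_neq0 i : d (x i) (x i) != 0 := orthogonal_basis_self_neq0 d_bilin d_nondeg i x_basis.
Let dyy_neq0 j : d (y j) (y j) != 0 := orthogonal_basis_self_neq0 d_bilin d_nondeg j y_basis.

Lemma address_s_scale c : c != 0 ->
  address_s (fun u v => c * d u v) x =
  if is_square c then address_s d x else (n - address_s d x)%N.
Proof.
move=> c_neq0; rewrite /address_s; case: ifP => c_sq.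
  by apply: eq_card => i; rewrite !inE is_squareM // c_sq.
set B := [set i | ~~ is_square (d (x i) (x i))].
transitivity #|~: B|; last by rewrite cardsCs setCK card_ord.
by apply: eq_card => i; rewrite !inE is_squareM // c_sq; case: is_square.
Qed.

Lemma odd_address_s : odd (address_s d x) = odd (address_s d y).
Proof.
rewrite /address_s -!is_square_prod //.
have [e e_neq0 ->] := prod_self_change_basis d_bilin x_basis y_basis.
by rewrite is_square_sqrM //; apply/prodf_neq0 => j _.
Qed.

Lemma address_s_isom_star A c : in_Isom_star d A c -> maps_lines_onto x y A ->
  address_s (fun u v => c * d u v) x = address_s d y.
Proof.
move=> [_ [c_neq0 A_isom]] [/fin_all_exists[sig x_sig] _].
have /fin_all_exists[l x_A] i : exists l, x i *m A = l *: y (sig i).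
  by apply/sub_rVP; case/andP: (x_sig i).
have d_sq i : c * d (x i) (x i) = l i ^+ 2 * d (y (sig i)) (y (sig i)).
  by rewrite -A_isom x_A formZl // formZr // mulrA -expr2.
have l_neq0 i : l i != 0.
  apply: contra_neq (mulf_neq0 c_neq0 (dxx_neq0 i)).
  by rewrite d_sq => ->; rewrite expr0n mul0r.
have sig_inj : injective sig.
  move=> i k sig_ik; apply/eqP; apply: contraT => ik.
  have := A_isom (x i) (x k); rewrite x_A x_A sig_ik formZl // formZr // x_basis.2 // mulr0.
  by move/eqP; rewrite !mulf_eq0 (negbTE (l_neq0 i)) (negbTE (l_neq0 k)) (negbTE (dyy_neq0 _)).
rewrite /address_s -[RHS](card_preimset _ sig_inj).
by apply: eq_card => i; rewrite !inE /= d_sq is_square_sqrM.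
Qed.

Lemma exists_isom_star c : c != 0 ->
  address_s (fun u v => c * d u v) x = address_s d y ->
  exists A, in_Isom_star d A c /\ maps_lines_onto x y A.
Proof.
move=> c_neq0 /perm_of_card_eq[s s_sq].
have /fin_all_exists[mu mu_sq] i :
    exists mu, mu != 0 /\ mu ^+ 2 * d (y (s i)) (y (s i)) = c * d (x i) (x i).
  have [|k k_neq0 <-] := exists_sqrM two_neq0 (mulf_neq0 c_neq0 (dxx_neq0 i)) (dyy_neq0 (s i)).
    by move: (s_sq i); rewrite !inE => /negb_inj.
  by exists k.
pose z i := mu i *: y (s i).
have z_orth i k : i != k -> d (z i) (z k) = 0.
  by move=> ik; rewrite formZl // formZr // y_basis.2 ?mulr0 // (inj_eq perm_inj).
have z_free : row_free (\matrix_i z i).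
  have -> : \matrix_i z i = diag_mx (\row_i mu i) *m (perm_mx s *m \matrix_j y j).
    by rewrite -row_permE; apply/matrixP => i j; rewrite mul_diag_mx !mxE.
  have Y_unit : \matrix_j y j \in unitmx by rewrite -row_free_unit; case: y_basis.
  rewrite row_free_unit !unitmx_mul unitmx_perm Y_unit !andbT.
  by rewrite unitmxE det_diag unitfE; apply/prodf_neq0 => i _; rewrite mxE (mu_sq i).1.
have [A A_unit x_A] := exists_mx_map_rows x_basis.1 z_free.
exists A; split; first split=> //; first split=> //.
  apply: isometry_of_orthogonal_basis x_A _ => // i.
  by rewrite formZl // formZr // mulrA -expr2 (mu_sq i).2.
split=> [i | j]; first by exists (s i); rewrite x_A; apply/eqmxP/eqmx_scale; case: (mu_sq i).
by exists (s^-1 j)%g; rewrite x_A /z permKV; apply/eqmxP/eqmx_scale; case: (mu_sq (s^-1 j)%g).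
Qed.

Lemma exists_isom_star_lines_iff :
  (exists A c, in_Isom_star d A c /\ maps_lines_onto x y A) <->
  address_s d x = address_s d y \/ address_s d x = (n - address_s d y)%N.
Proof.
have [s_le r_le] := (address_s_le d x, address_s_le d y).
split=> [[A [c [isom lines]]] | s_r].
  have c_neq0 : c != 0 by case: isom => _ [].
  have := address_s_isom_star isom lines; rewrite address_s_scale //.
  by case: is_square => <-; [left | right; rewrite subKn].
suff [c c_neq0 /(exists_isom_star c_neq0)[A]] :
    exists2 c, c != 0 & address_s (fun u v => c * d u v) x = address_s d y.
  by exists A, c.
have [e e_nsq] := exists_nonsquare two_neq0.
have e_neq0 : e != 0 by apply: contraNneq e_nsq => ->; apply/existsP; exists 0; rewrite expr0n.
case: s_r => s_r; first by exists 1; rewrite ?oner_neq0 // address_s_scale ?oner_neq0 ?is_square1.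
by exists e; rewrite // address_s_scale // (negbTE e_nsq) s_r subKn.
Qed.
End Address.

Theorem corollary6p4 (K : finFieldType) (n : nat)
  (d : 'rV[K]_n -> 'rV[K]_n -> K) (x y : 'I_n -> 'rV[K]_n) :
  (2%:R : K) != 0 ->
  is_bilinear_form d -> my_symmetric_form d -> my_nondegenerate_form d ->
  my_orthogonal_basis d x -> my_orthogonal_basis d y ->
  let s := address_s d x in
  let r := address_s d y in
  (odd n ->
     ((exists (A : 'M[K]_n) (c : K), in_Isom_star d A c /\ maps_lines_onto x y A)
      <-> s = r)) /\
  (~~ odd n ->
     ((exists (A : 'M[K]_n) (c : K), in_Isom_star d A c /\ maps_lines_onto x y A)
      <-> (s = r \/ s = (n - r)%N))).
Proof.
move=> two_neq0 d_bilin _ d_nondeg x_basis y_basis s r.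
have isom_iff := exists_isom_star_lines_iff two_neq0 d_bilin d_nondeg x_basis y_basis.
split=> [n_odd | _]; last exact: isom_iff.
split=> [/isom_iff[//|s_nr] | s_r]; last by apply/isom_iff; left.
have := odd_address_s two_neq0 d_bilin d_nondeg x_basis y_basis.
by rewrite s_nr oddB ?address_s_le // n_odd; case: odd.
Qed.
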